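(* Consider the theory of equality with uninterpreted functions (EUF). Let $G$ be a finite set of EUF predicates and $m := |\mathit{terms}(G)|$. Then $D_T(G) \le 3m$; that is, for every subset $G' \subseteq G$ and every integer $N \ge 3m$, the saturation procedure $\mathrm{Sat}_N(G')$ returns UNSATISFIABLE if and only if $G'$ is unsatisfiable in EUF.
   Context: EUF terms are variables or applications $f(t_1,\dots,t_n)$ of uninterpreted function symbols to terms; EUF predicates are $t_1 = t_2$ or $t_1 \neq t_2$ for terms $t_1,t_2$. $\mathit{terms}(\phi)$ is the set of syntactically distinct subterms occurring in $\phi$ (e.g. $\mathit{terms}(f(h(x))) = \{x, h(x), f(h(x))\}$), and $\mathit{terms}(G)$ is the union over $g\in G$. The inference rules are: from $X=Y$ derive $Y=X$; from $X=Y$ and $Y=Z$ derive $X=Z$; from $X=Y$ and $X\neq Y$ derive $\bot$; from $X_1=Y_1,\dots,X_n=Y_n$ derive $f(X_1,\dots,X_n)=f(Y_1,\dots,Y_n)$. When run on an input set $H$, only equalities between terms in $\mathit{terms}(H)$ are derived. Saturation procedure $\mathrm{Sat}_N(H)$: (1) $W := H$. (2) Repeat $N$ times: $W' := W$; for every predicate $g\notin W'$ derivable in one rule application from predicates all in $W'$, add $g$ to $W$. (3) Return UNSATISFIABLE if $\bot$ is derivable in one rule application from predicates in $W$, else SATISFIABLE. $D_T(G)$ denotes the maximum over $G'\subseteq G$ of the least number $d$ such that $\mathrm{Sat}_N(G')$ correctly decides satisfiability of $G'$ for all $N\ge d$.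
   Formalization: The inference rules of $\mathrm{Sat}_N$ also derive $x=x$ for every variable $x$ in $\mathit{terms}(H)$, so variables count as nullary function symbols under the congruence rule. The statement above fails without it. *)

From Stdlib Require Import List Arith Lia.
Import ListNotations.

(* Symbols are identified by
   their name together with their arity (the length of the argument list). *)
Inductive term : Type :=
| Var : nat -> term
| App : nat -> list term -> term.

Inductive pred : Type :=
| PEq  : term -> term -> pred
| PNeq : term -> term -> pred.

Definition predset := pred -> Prop.

Inductive subterm : term -> term -> Prop :=
| subterm_refl : forall t, subterm t t
| subterm_arg : forall s a f args, In a args -> subterm s a -> subterm s (App f args).

Definition sides (g : pred) : term * term :=
  match g with PEq a b => (a, b) | PNeq a b => (a, b) end.

Definition terms (H : predset) (t : term) : Prop :=
  exists g, H g /\ (subterm t (fst (sides g)) \/ subterm t (snd (sides g))).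

Definition card_terms (H : predset) (m : nat) : Prop :=
  exists l : list term, NoDup l /\ (forall t, In t l <-> terms H t) /\ length l = m.

Inductive step (T : term -> Prop) (W : predset) : pred -> Prop :=
| step_sym : forall x y, T x -> T y -> W (PEq x y) -> step T W (PEq y x)
| step_trans : forall x y z, T x -> T z -> W (PEq x y) -> W (PEq y z) -> step T W (PEq x z)
| step_cong : forall f xs ys, T (App f xs) -> T (App f ys) ->
    Forall2 (fun x y => W (PEq x y)) xs ys -> step T W (PEq (App f xs) (App f ys))
(* variables viewed as nullary symbols: congruence with n = 0 *)
| step_cong_var : forall x, T (Var x) -> step T W (PEq (Var x) (Var x)).

Definition bot_derivable (W : predset) : Prop :=
  exists x y, W (PEq x y) /\ W (PNeq x y).

(* W after k rounds of step (2) of Sat_N(H) *)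
Fixpoint satW (H : predset) (k : nat) : predset :=
  match k with
  | O => H
  | S k' => fun g => satW H k' g \/ step (terms H) (satW H k') g
  end.

Definition Sat_unsat (N : nat) (H : predset) : Prop := bot_derivable (satW H N).

(* EUF semantics: a domain D, values of variables, and for each symbol name an
   interpretation on argument lists (so each (name, arity) gets a function D^n -> D). *)
Fixpoint eval {D : Type} (v : nat -> D) (fn : nat -> list D -> D) (t : term) : D :=
  match t with
  | Var x => v x
  | App f args => fn f (map (eval v fn) args)
  end.

Definition holds {D : Type} (v : nat -> D) (fn : nat -> list D -> D) (g : pred) : Prop :=
  match g with
  | PEq a b => eval v fn a = eval v fn b
  | PNeq a b => eval v fn a <> eval v fn b
  end.

Definition satisfiable (H : predset) : Prop :=
  exists (D : Type) (v : nat -> D) (fn : nat -> list D -> D), forall g, H g -> holds v fn g.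

From Stdlib Require Import List Arith Lia Permutation.
From Stdlib Require Import Classical ClassicalEpsilon.
From Stdlib Require Import FunctionalExtensionality PropExtensionality.
Import ListNotations.

(* Soundness holds because every rule preserves truth in any model.  For
   completeness, grow a partition P of part of terms(G') such that after
   [potential P] rounds every equality inside a class is derived, a class
   weighing 1 if it is a singleton and 3|K| - 3 otherwise.  A term whose
   arguments are covered joins as a singleton one round later (congruence).
   Two classes A, B linked by an input equation or by congruence are merged:
   connecting their elements through the link takes
   1 + class_depth A + class_depth B more rounds, exactly the increase in
   weight.  The potential is bounded by 3 |terms(G')| <= 3m, so the process
   reaches a congruence-closed partition; its quotient is a model of G' unless
   some disequation lies inside a class, and then bottom is derivable. *)

Fixpoint term_nested_ind (P : term -> Prop) (HVar : forall x, P (Var x))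
  (HApp : forall f args, Forall P args -> P (App f args)) (t : term) : P t :=
  match t with
  | Var x => HVar x
  | App f args => HApp f args
      ((fix all_args (l : list term) : Forall P l :=
          match l with
          | [] => Forall_nil P
          | a :: l' => Forall_cons a (term_nested_ind P HVar HApp a) (all_args l')
          end) args)
  end.

Lemma Permutation_concat {A : Type} (P Q : list (list A)) :
  Permutation P Q -> Permutation (concat P) (concat Q).
Proof.
  induction 1; simpl.
  - constructor.
  - now apply Permutation_app_head.
  - apply Permutation_app_swap_app.
  - eapply Permutation_trans; eassumption.
Qed.

Lemma NoDup_app_disjoint {A : Type} (l1 l2 : list A) x :
  NoDup (l1 ++ l2) -> In x l1 -> In x l2 -> False.
Proof.
  induction l1 as [|a l1 IH]; simpl; intros Hnd Hx1 Hx2; [easy|].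
  inversion Hnd as [|? ? Ha Hnd']; subst.
  destruct Hx1 as [<-|Hx1]; [apply Ha, in_or_app; now right|].
  exact (IH Hnd' Hx1 Hx2).
Qed.

Lemma Permutation_two_members {A : Type} (P : list A) a b :
  In a P -> In b P -> a <> b -> exists R, Permutation P (a :: b :: R).
Proof.
  intros Ha Hb Hab. destruct (in_split _ _ Ha) as [l1 [l2 ->]].
  assert (Hb' : In b (l1 ++ l2)).
  { apply in_app_or in Hb as [Hb|[Hb|Hb]]; apply in_or_app; auto; congruence. }
  destruct (in_split _ _ Hb') as [m1 [m2 Hm]]. exists (m1 ++ m2).
  rewrite <- Permutation_middle. apply perm_skip.
  rewrite Hm. symmetry. apply Permutation_middle.
Qed.

Lemma Forall2_diag {A : Type} (R : A -> A -> Prop) xs :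
  (forall x, In x xs -> R x x) -> Forall2 R xs xs.
Proof. induction xs; simpl; constructor; auto. Qed.

Lemma subterm_app_arg s t f xs x :
  subterm s t -> s = App f xs -> In x xs -> subterm x t.
Proof.
  induction 1 as [t|s a g args Ha _ IH]; intros -> Hx.
  - exact (subterm_arg x x f xs Hx (subterm_refl x)).
  - exact (subterm_arg x a g args Ha (IH eq_refl Hx)).
Qed.

Section Saturation.

Variable H : predset.

Lemma terms_arg f xs x : terms H (App f xs) -> In x xs -> terms H x.
Proof.
  intros [g [Hg Hs]] Hx. exists g. split; [exact Hg|].
  destruct Hs as [Hs|Hs]; [left|right]; eapply subterm_app_arg; eauto.
Qed.

Lemma terms_lhs g : H g -> terms H (fst (sides g)).
Proof. intros Hg. exists g. split; [exact Hg|left; constructor]. Qed.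

Lemma terms_rhs g : H g -> terms H (snd (sides g)).
Proof. intros Hg. exists g. split; [exact Hg|right; constructor]. Qed.

Lemma satW_monotone k k' g : k <= k' -> satW H k g -> satW H k' g.
Proof. induction 1; simpl; auto. Qed.

Lemma satW_sym k x y :
  terms H x -> terms H y -> satW H k (PEq x y) -> satW H (S k) (PEq y x).
Proof. intros. right. now apply step_sym. Qed.

Lemma satW_trans k x y z : terms H x -> terms H z ->
  satW H k (PEq x y) -> satW H k (PEq y z) -> satW H (S k) (PEq x z).
Proof. intros. right. now apply step_trans with y. Qed.

Lemma satW_cong k f xs ys : terms H (App f xs) -> terms H (App f ys) ->
  Forall2 (fun x y => satW H k (PEq x y)) xs ys ->
  satW H (S k) (PEq (App f xs) (App f ys)).
Proof. intros. right. now apply step_cong. Qed.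

Lemma satW_sound (D : Type) (v : nat -> D) (fn : nat -> list D -> D) :
  (forall g, H g -> holds v fn g) -> forall k g, satW H k g -> holds v fn g.
Proof.
  intros HH k. induction k as [|k IH]; intros g Hg; [now apply HH|].
  destruct Hg as [Hg|Hg]; [now apply IH|].
  destruct Hg as [x y _ _ Hxy|x y z _ _ Hxy Hyz|f xs ys _ _ Hargs|x _]; simpl.
  - symmetry. exact (IH _ Hxy).
  - exact (eq_trans (IH _ Hxy) (IH _ Hyz)).
  - f_equal. induction Hargs as [|x y xs ys Hxy _ IHargs]; simpl; [reflexivity|].
    f_equal; [exact (IH _ Hxy)|exact IHargs].
  - reflexivity.
Qed.

Lemma Sat_unsat_sound N : Sat_unsat N H -> ~ satisfiable H.
Proof.
  intros [x [y [Heq Hneq]]] [D [v [fn HH]]].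
  exact (satW_sound D v fn HH N _ Hneq (satW_sound D v fn HH N _ Heq)).
Qed.

End Saturation.

Definition class_weight (K : list term) : nat :=
  match K with [_] => 1 | _ => 3 * length K - 3 end.

Definition class_depth (K : list term) : nat :=
  match K with [_] => 0 | _ => 1 end.

Fixpoint potential (P : list (list term)) : nat :=
  match P with [] => 0 | K :: P' => class_weight K + potential P' end.

Definition same_class (P : list (list term)) (a b : term) : Prop :=
  exists K, In K P /\ In a K /\ In b K.

Record derived_partition (H : predset) (P : list (list term)) : Prop := {
  partition_nodup : NoDup (concat P);
  partition_terms : forall t, In t (concat P) -> terms H t;
  partition_derived : forall a b, same_class P a b -> satW H (potential P) (PEq a b) }.

Lemma class_weight_app A B : A <> [] -> B <> [] ->
  class_weight (A ++ B) =
  S (class_weight A + class_weight B + class_depth A + class_depth B).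
Proof.
  intros HA HB.
  destruct A as [|x [|y A]]; [easy| |]; destruct B as [|x' [|y' B]]; try easy;
    simpl; rewrite ?length_app; simpl; lia.
Qed.

Lemma class_depth_two A a b : In a A -> In b A -> a <> b -> class_depth A = 1.
Proof.
  destruct A as [|x [|y A]]; simpl; try easy.
  intros [<-|[]] [<-|[]]. congruence.
Qed.

Lemma potential_le P : potential P <= 3 * length (concat P).
Proof.
  induction P as [|K P IH]; simpl; [lia|]. rewrite length_app.
  enough (class_weight K <= 3 * length K) by lia.
  destruct K as [|x [|y K]]; simpl; lia.
Qed.

Lemma potential_perm P Q : Permutation P Q -> potential P = potential Q.
Proof. induction 1; simpl; lia. Qed.

Lemma same_class_sym P a b : same_class P a b -> same_class P b a.
Proof. intros [K [HK [Ha Hb]]]. now exists K. Qed.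

Lemma same_class_refl P t : In t (concat P) -> same_class P t t.
Proof. intros [K [HK Ht]]%in_concat. now exists K. Qed.

Lemma class_unique P (K K' : list term) t : NoDup (concat P) ->
  In K P -> In K' P -> In t K -> In t K' -> K = K'.
Proof.
  induction P as [|K0 P IH]; simpl; intros Hnd HK HK' Ht Ht'; [easy|].
  destruct HK as [<-|HK], HK' as [<-|HK']; try reflexivity.
  - exfalso. apply (NoDup_app_disjoint _ _ t Hnd Ht). apply in_concat. eauto.
  - exfalso. apply (NoDup_app_disjoint _ _ t Hnd Ht'). apply in_concat. eauto.
  - exact (IH (NoDup_app_remove_l _ _ Hnd) HK HK' Ht Ht').
Qed.

Lemma same_class_trans P a b c : NoDup (concat P) ->
  same_class P a b -> same_class P b c -> same_class P a c.
Proof.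
  intros Hnd [K [HK [Ha Hb]]] [K' [HK' [Hb' Hc]]].
  rewrite <- (class_unique P K K' b Hnd HK HK' Hb Hb') in Hc. now exists K.
Qed.

Definition args_covered (P : list (list term)) (t : term) : Prop :=
  match t with Var _ => True | App _ xs => incl xs (concat P) end.

Section Partition.

Variable H : predset.

Lemma derived_partition_nil : derived_partition H [].
Proof.
  constructor; simpl.
  - constructor.
  - easy.
  - intros a b [K [[] _]].
Qed.

Lemma derived_partition_perm P Q :
  Permutation P Q -> derived_partition H P -> derived_partition H Q.
Proof.
  intros Hperm [Hnd HT Hder]. pose proof (Permutation_concat P Q Hperm) as Hc.
  constructor.
  - exact (Permutation_NoDup Hc Hnd).
  - intros t Ht. apply HT. exact (Permutation_in _ (Permutation_sym Hc) Ht).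
  - intros a b [K [HK [Ha Hb]]]. rewrite <- (potential_perm P Q Hperm).
    apply Hder. exists K. split; [|now split].
    exact (Permutation_in _ (Permutation_sym Hperm) HK).
Qed.

Lemma derived_partition_add_singleton P t : derived_partition H P ->
  terms H t -> ~ In t (concat P) -> args_covered P t -> derived_partition H ([t] :: P).
Proof.
  intros [Hnd HT Hder] Ht Hnew Hargs. constructor; simpl.
  - now constructor.
  - intros s [<-|Hs]; auto.
  - intros a b [K [[<-|HK] [Ha Hb]]].
    + destruct Ha as [<-|[]], Hb as [<-|[]]. right.
      destruct t as [x|f xs]; [now apply step_cong_var|].
      apply step_cong; [exact Ht|exact Ht|].
      apply Forall2_diag. intros x Hx. apply Hder, same_class_refl, Hargs, Hx.
    + left. apply Hder. now exists K.
Qed.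

Lemma satW_bridge n A B u v a b :
  (forall x y, In x A -> In y A -> satW H n (PEq x y)) ->
  (forall x y, In x B -> In y B -> satW H n (PEq x y)) ->
  In a A -> In u A -> In v B -> In b B ->
  terms H a -> terms H v -> terms H b ->
  satW H n (PEq u v) -> satW H (n + class_depth A + class_depth B) (PEq a b).
Proof.
  intros HA HB Ha Hu Hv Hb Ta Tv Tb Huv.
  assert (Hav : satW H (n + class_depth A) (PEq a v)).
  { destruct (classic (a = u)) as [->|Hau].
    - apply satW_monotone with n; [lia|exact Huv].
    - rewrite (class_depth_two A a u Ha Hu Hau), Nat.add_1_r.
      exact (satW_trans H n a u v Ta Tv (HA a u Ha Hu) Huv). }
  destruct (classic (b = v)) as [->|Hbv].
  - apply satW_monotone with (n + class_depth A); [lia|exact Hav].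
  - rewrite (class_depth_two B b v Hb Hv Hbv), Nat.add_1_r.
    apply satW_trans with v; [exact Ta|exact Tb|exact Hav|].
    apply satW_monotone with n; [lia|exact (HB v b Hv Hb)].
Qed.

Lemma derived_partition_merge A B R u v :
  derived_partition H (A :: B :: R) -> In u A -> In v B ->
  satW H (S (potential (A :: B :: R))) (PEq u v) ->
  satW H (S (potential (A :: B :: R))) (PEq v u) ->
  derived_partition H ((A ++ B) :: R) /\
  potential (A :: B :: R) < potential ((A ++ B) :: R).
Proof.
  intros [Hnd HT Hder] Hu Hv Huv Hvu.
  set (n := S (potential (A :: B :: R))) in *.
  assert (Hpot : potential ((A ++ B) :: R) = n + class_depth A + class_depth B).
  { subst n. simpl. rewrite class_weight_app by (intros ->; easy). lia. }
  assert (TA : forall x, In x A -> terms H x).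
  { intros x Hx. apply HT. simpl. apply in_or_app. now left. }
  assert (TB : forall x, In x B -> terms H x).
  { intros x Hx. apply HT. simpl. apply in_or_app. right. apply in_or_app. now left. }
  assert (DA : forall x y, In x A -> In y A -> satW H n (PEq x y)).
  { intros x y Hx Hy. apply satW_monotone with (potential (A :: B :: R)); [lia|].
    apply Hder. exists A. simpl. auto. }
  assert (DB : forall x y, In x B -> In y B -> satW H n (PEq x y)).
  { intros x y Hx Hy. apply satW_monotone with (potential (A :: B :: R)); [lia|].
    apply Hder. exists B. simpl. auto. }
  split; [|lia]. constructor.
  - simpl in *. now rewrite <- app_assoc.
  - intros t Ht. apply HT. simpl in *. now rewrite <- app_assoc in Ht.
  - rewrite Hpot. intros a b [K [[<-|HK] [Ha Hb]]].
    + apply in_app_or in Ha as [Ha|Ha], Hb as [Hb|Hb].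
      * apply satW_monotone with n; [lia|auto].
      * apply (satW_bridge n A B u v); auto.
      * rewrite <- Nat.add_assoc, (Nat.add_comm (class_depth A)), Nat.add_assoc.
        apply (satW_bridge n B A v u); auto.
      * apply satW_monotone with n; [lia|auto].
    + apply satW_monotone with (potential (A :: B :: R)); [lia|].
      apply Hder. exists K. simpl. auto.
Qed.

Lemma derived_partition_join P u v : derived_partition H P ->
  In u (concat P) -> In v (concat P) -> ~ same_class P u v ->
  satW H (S (potential P)) (PEq u v) -> satW H (S (potential P)) (PEq v u) ->
  exists P', derived_partition H P' /\ potential P < potential P'.
Proof.
  intros HP [A [HA Hu]]%in_concat [B [HB Hv]]%in_concat Hsep Huv Hvu.
  assert (HAB : A <> B) by (intros <-; apply Hsep; now exists A).
  destruct (Permutation_two_members P A B HA HB HAB) as [R Hperm].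
  rewrite (potential_perm _ _ Hperm) in *.
  destruct (derived_partition_merge A B R u v) as [HP' Hlt]; auto.
  - exact (derived_partition_perm P _ Hperm HP).
  - now exists ((A ++ B) :: R).
Qed.

End Partition.

Record congruence_closed (H : predset) (P : list (list term)) : Prop := {
  closed_covers : forall t, terms H t -> In t (concat P);
  closed_equations : forall u v, H (PEq u v) -> same_class P u v;
  closed_congruence : forall f xs ys, terms H (App f xs) -> terms H (App f ys) ->
    Forall2 (same_class P) xs ys -> same_class P (App f xs) (App f ys) }.

Section Completion.

Variable H : predset.

Lemma terms_covered_or_addable_term P :
  (forall t, terms H t -> In t (concat P)) \/
  exists t, terms H t /\ ~ In t (concat P) /\ args_covered P t.
Proof.
  destruct (classic (exists t, terms H t /\ ~ In t (concat P) /\ args_covered P t))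
    as [Hnew|Hnone]; [now right|left].
  intros t. induction t as [x|f xs IH] using term_nested_ind; intros Ht;
    apply NNPP; intros Hout; apply Hnone.
  - now exists (Var x).
  - exists (App f xs). repeat split; [exact Ht|exact Hout|].
    intros a Ha. rewrite Forall_forall in IH.
    exact (IH a Ha (terms_arg H f xs a Ht Ha)).
Qed.

Lemma derived_partition_progress P : derived_partition H P ->
  congruence_closed H P \/
  exists P', derived_partition H P' /\ potential P < potential P'.
Proof.
  intros HP.
  destruct (terms_covered_or_addable_term P) as [Hcov|[t [Ht [Hout Hargs]]]].
  2:{ right. exists ([t] :: P). split; [now apply derived_partition_add_singleton|].
      simpl. lia. }
  destruct (classic (exists u v, H (PEq u v) /\ ~ same_class P u v))
    as [[u [v [Huv Hsep]]]|Heqs].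
  { right. pose proof (terms_lhs H _ Huv) as Tu. pose proof (terms_rhs H _ Huv) as Tv.
    simpl in Tu, Tv.
    apply (derived_partition_join H P u v HP (Hcov u Tu) (Hcov v Tv) Hsep).
    - apply satW_monotone with 0; [lia|exact Huv].
    - apply satW_sym; [exact Tu|exact Tv|].
      apply satW_monotone with 0; [lia|exact Huv]. }
  destruct (classic (exists f xs ys, terms H (App f xs) /\ terms H (App f ys) /\
      Forall2 (same_class P) xs ys /\ ~ same_class P (App f xs) (App f ys)))
    as [[f [xs [ys [Txs [Tys [Hargs Hsep]]]]]]|Hcongs].
  { right. apply (derived_partition_join H P _ _ HP (Hcov _ Txs) (Hcov _ Tys) Hsep).
    - apply satW_cong; auto.
      eapply Forall2_impl; [|exact Hargs]. apply (partition_derived _ _ HP).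
    - apply satW_cong; auto. apply Forall2_flip.
      eapply Forall2_impl; [|exact Hargs].
      intros a b Hab. now apply (partition_derived _ _ HP), same_class_sym. }
  left. constructor; [exact Hcov| |].
  - intros u v Huv. apply NNPP. intros Hsep. apply Heqs. eauto.
  - intros f xs ys Txs Tys Hargs. apply NNPP. intros Hsep. apply Hcongs. eauto 7.
Qed.

Lemma potential_bound P l : derived_partition H P ->
  (forall t, terms H t -> In t l) -> potential P <= 3 * length l.
Proof.
  intros HP Hl. pose proof (potential_le P).
  enough (length (concat P) <= length l) by lia.
  apply NoDup_incl_length; [exact (partition_nodup _ _ HP)|].
  intros t Ht. exact (Hl t (partition_terms _ _ HP t Ht)).
Qed.

Lemma congruence_closed_exists l : (forall t, terms H t -> In t l) ->
  exists P, derived_partition H P /\ congruence_closed H P.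
Proof.
  intros Hl.
  enough (Hk : forall k P, derived_partition H P -> 3 * length l - potential P <= k ->
    exists P', derived_partition H P' /\ congruence_closed H P').
  { exact (Hk _ [] (derived_partition_nil H) (le_n _)). }
  induction k as [|k IH]; intros P HP Hk;
    destruct (derived_partition_progress P HP) as [Hc|[P' [HP' Hlt]]]; eauto;
    pose proof (potential_bound P' l HP' Hl).
  - lia.
  - apply (IH P' HP'). lia.
Qed.

End Completion.

Definition class_of (P : list (list term)) (t : term) : term -> Prop := same_class P t.

Lemma class_of_eq P a b : NoDup (concat P) ->
  same_class P a b -> class_of P a = class_of P b.
Proof.
  intros Hnd Hab. apply functional_extensionality. intros s.
  apply propositional_extensionality. split; intros Hs.
  - exact (same_class_trans P b a s Hnd (same_class_sym P a b Hab) Hs).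
  - exact (same_class_trans P a b s Hnd Hab Hs).
Qed.

Lemma same_class_of_class_eq P a b : In b (concat P) ->
  class_of P a = class_of P b -> same_class P a b.
Proof.
  intros Hb Hab. change (class_of P a b). rewrite Hab. now apply same_class_refl.
Qed.

Lemma Forall2_same_class_of_map_eq P xs ys : incl ys (concat P) ->
  map (class_of P) xs = map (class_of P) ys -> Forall2 (same_class P) xs ys.
Proof.
  revert ys. induction xs as [|x xs IH]; intros [|y ys] Hys Hmap; try discriminate;
    constructor; injection Hmap as Hxy Hmap.
  - apply same_class_of_class_eq; [apply Hys; now left|exact Hxy].
  - apply IH; [intros z Hz; apply Hys; now right|exact Hmap].
Qed.

(* Each symbol is interpreted on classes via some representative argument list
   occurring in [terms H]; congruence closure makes the choice irrelevant. *)
Definition quotient_fn (H : predset) (P : list (list term)) (f : nat)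
  (ds : list (term -> Prop)) : term -> Prop :=
  class_of P (App f (epsilon (inhabits [])
    (fun xs => terms H (App f xs) /\ map (class_of P) xs = ds))).

Section Quotient.

Variables (H : predset) (P : list (list term)).
Hypotheses (Hnd : NoDup (concat P)) (Hclosed : congruence_closed H P).

Lemma eval_quotient t : terms H t ->
  eval (fun x => class_of P (Var x)) (quotient_fn H P) t = class_of P t.
Proof.
  induction t as [x|f xs IH] using term_nested_ind; intros Ht; [reflexivity|].
  simpl. rewrite Forall_forall in IH.
  assert (Hargs : map (eval (fun x => class_of P (Var x)) (quotient_fn H P)) xs =
                  map (class_of P) xs).
  { apply map_ext_in. intros x Hx. exact (IH x Hx (terms_arg H f xs x Ht Hx)). }
  rewrite Hargs. unfold quotient_fn.
  set (rep := fun ys => terms H (App f ys) /\ map (class_of P) ys = map (class_of P) xs).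
  destruct (epsilon_spec (inhabits []) rep (ex_intro _ xs (conj Ht eq_refl)))
    as [Trep Hrep].
  apply class_of_eq; [exact Hnd|].
  apply (closed_congruence _ _ Hclosed); [exact Trep|exact Ht|].
  apply Forall2_same_class_of_map_eq; [|exact Hrep].
  intros x Hx. exact (closed_covers _ _ Hclosed x (terms_arg H f xs x Ht Hx)).
Qed.

Lemma congruence_closed_satisfiable :
  (forall a b, H (PNeq a b) -> ~ same_class P a b) -> satisfiable H.
Proof.
  intros Hdiseq. exists (term -> Prop), (fun x => class_of P (Var x)), (quotient_fn H P).
  intros [a b|a b] Hg; simpl;
    pose proof (terms_lhs H _ Hg) as Ta; pose proof (terms_rhs H _ Hg) as Tb;
    simpl in Ta, Tb; rewrite (eval_quotient a Ta), (eval_quotient b Tb).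
  - apply class_of_eq; [exact Hnd|].
    exact (closed_equations _ _ Hclosed a b Hg).
  - intros Hab. apply (Hdiseq a b Hg). apply same_class_of_class_eq; [|exact Hab].
    exact (closed_covers _ _ Hclosed b Tb).
Qed.

End Quotient.

Theorem proposition3p9 :
  forall (G : list pred) (m : nat),
    card_terms (fun g => In g G) m ->
    forall (G' : predset), (forall g, G' g -> In g G) ->
    forall N : nat, 3 * m <= N ->
      (Sat_unsat N G' <-> ~ satisfiable G').
Proof.
  intros G m [l [_ [Hl <-]]] G' HG' N HN.
  assert (Hcover : forall t, terms G' t -> In t l).
  { intros t [g [Hg Ht]]. apply Hl. exists g. auto. }
  split; [apply Sat_unsat_sound|intros Hunsat].
  destruct (congruence_closed_exists G' l Hcover) as [P [HP Hclosed]].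
  pose proof (potential_bound G' P l HP Hcover) as Hpot.
  destruct (classic (exists a b, G' (PNeq a b) /\ same_class P a b))
    as [[a [b [Hab Hsame]]]|Hnone].
  - exists a, b. split.
    + apply satW_monotone with (potential P); [lia|].
      exact (partition_derived _ _ HP a b Hsame).
    + apply satW_monotone with 0; [lia|exact Hab].
  - exfalso. apply Hunsat.
    apply (congruence_closed_satisfiable G' P (partition_nodup _ _ HP) Hclosed).
    intros a b Hab Hsame. eauto.
Qed.
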